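(* Assume the setting and the CRAIG recurrence described in the context, and let $k\ge 1$ be an index for which $u^{(k)},p^{(k)}$ are defined. Then $p^{(k)}$ coincides with the $k$-th iterate of the conjugate gradient method, started from the zero initial guess and preconditioned with $N$, applied to the Schur-complement equation $Sp=-b$, where $S=A^TM^{-1}A+C$. That is, $p^{(k)}$ is the unique vector $p\in\mathcal{K}_k:=\operatorname{span}\{N^{-1}b,(N^{-1}S)N^{-1}b,\dots,(N^{-1}S)^{k-1}N^{-1}b\}$ such that $(-b-Sp)^Tx=0$ for all $x\in\mathcal{K}_k$ (equivalently, $p^{(k)}$ minimizes $\|p_*-p\|_S=((p_*-p)^TS(p_*-p))^{1/2}$ over $p\in\mathcal{K}_k$, where $p_*$ solves $Sp_*=-b$). Moreover, $u^{(k)}=-M^{-1}Ap^{(k)}$.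
   Context: Setting: $M\in\mathbb{R}^{m\times m}$ is symmetric positive definite, $A\in\mathbb{R}^{m\times n}$ ($n\le m$) has full column rank, $C\in\mathbb{R}^{n\times n}$ is symmetric positive semidefinite, $b\in\mathbb{R}^n$ is nonzero, and $N\in\mathbb{R}^{n\times n}$ is symmetric positive definite (the preconditioner). For a symmetric positive definite $G$ write $\|x\|_G=(x^TGx)^{1/2}$. The generalized saddle point system is $Mu+Ap=0$, $A^Tu-Cp=b$, with unique solution $(u_*,p_* )$; $S=A^TM^{-1}A+C$. CRAIG recurrence (exact arithmetic): Initialization: $\beta_1=\|b\|_{N^{-1}}$, $q_1=N^{-1}b/\beta_1$, $r_1=q_1$, $w_1=M^{-1}Aq_1$, $s_1=Cr_1$, $\alpha_1=(w_1^TMw_1+r_1^Ts_1)^{1/2}$, $v_1=w_1/\alpha_1$, $t_1=s_1/\alpha_1$, $\zeta_1=\beta_1/\alpha_1$, $u^{(1)}=\zeta_1v_1$, $p^{(1)}=-(\zeta_1/\alpha_1)r_1$. For $k=1,2,\dots$: $g_k=N^{-1}(A^Tv_k+t_k)-\alpha_kq_k$, $\beta_{k+1}=\|g_k\|_N$; if $\beta_{k+1}=0$ the recurrence stops; otherwise $q_{k+1}=g_k/\beta_{k+1}$, $w_{k+1}=M^{-1}Aq_{k+1}-\beta_{k+1}v_k$, $r_{k+1}=q_{k+1}-(\beta_{k+1}/\alpha_k)r_k$, $s_{k+1}=Cr_{k+1}$, $\alpha_{k+1}=(w_{k+1}^TMw_{k+1}+r_{k+1}^Ts_{k+1})^{1/2}$,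 $v_{k+1}=w_{k+1}/\alpha_{k+1}$, $t_{k+1}=s_{k+1}/\alpha_{k+1}$, $\zeta_{k+1}=-(\beta_{k+1}/\alpha_{k+1})\zeta_k$, $u^{(k+1)}=u^{(k)}+\zeta_{k+1}v_{k+1}$, $p^{(k+1)}=p^{(k)}-(\zeta_{k+1}/\alpha_{k+1})r_{k+1}$. *)

(* matrices over an abstract real closed field R (needs Num.sqrt). *)
From HB Require Import structures.
From mathcomp Require Import all_boot all_order all_algebra.
Set Implicit Arguments. Unset Strict Implicit. Unset Printing Implicit Defensive.
Import Order.TTheory GRing.Theory Num.Theory.
Local Open Scope ring_scope.

Section Craig.
Variable R : rcfType.

Definition bform (k : nat) (G : 'M[R]_k) (x y : 'cV[R]_k) : R :=
  (x^T *m G *m y) 0 0.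

Definition gnorm (k : nat) (G : 'M[R]_k) (x : 'cV[R]_k) : R :=
  Num.sqrt (bform G x x).

Definition sym_mx (k : nat) (G : 'M[R]_k) : Prop := G^T = G.

Definition spd (k : nat) (G : 'M[R]_k) : Prop :=
  sym_mx G /\ forall x : 'cV[R]_k, x != 0 -> 0 < bform G x x.

Definition spsd (k : nat) (G : 'M[R]_k) : Prop :=
  sym_mx G /\ forall x : 'cV[R]_k, 0 <= bform G x x.

Variables (m n : nat).

Record craig_state := CraigState {
  cs_q : 'cV[R]_n; cs_v : 'cV[R]_m; cs_t : 'cV[R]_n; cs_r : 'cV[R]_n;
  cs_alpha : R; cs_zeta : R; cs_u : 'cV[R]_m; cs_p : 'cV[R]_n; cs_beta : R }.

Variables (M : 'M[R]_m) (A : 'M[R]_(m, n)) (C N : 'M[R]_n) (b : 'cV[R]_n).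

Definition craig_init : craig_state :=
  let beta1 := gnorm (invmx N) b in
  let q1 := beta1^-1 *: (invmx N *m b) in
  let r1 := q1 in
  let w1 := invmx M *m (A *m q1) in
  let s1 := C *m r1 in
  let alpha1 := Num.sqrt (bform M w1 w1 + (r1^T *m s1) 0 0) in
  let v1 := alpha1^-1 *: w1 in
  let t1 := alpha1^-1 *: s1 in
  let zeta1 := beta1 / alpha1 in
  CraigState q1 v1 t1 r1 alpha1 zeta1 (zeta1 *: v1) (- (zeta1 / alpha1) *: r1) beta1.

Definition craig_step (st : craig_state) : craig_state :=
  let g := invmx N *m (A^T *m cs_v st + cs_t st) - cs_alpha st *: cs_q st in
  let beta' := gnorm N g in
  let q' := beta'^-1 *: g in
  let w' := invmx M *m (A *m q') - beta' *: cs_v st in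
  let r' := q' - (beta' / cs_alpha st) *: cs_r st in
  let s' := C *m r' in
  let alpha' := Num.sqrt (bform M w' w' + (r'^T *m s') 0 0) in
  let v' := alpha'^-1 *: w' in
  let t' := alpha'^-1 *: s' in
  let zeta' := - (beta' / alpha') * cs_zeta st in
  CraigState q' v' t' r' alpha' zeta' (cs_u st + zeta' *: v')
             (cs_p st - (zeta' / alpha') *: r') beta'.

(* craig k = state at index k, for k >= 1 (craig 0 is unused and equals craig 1) *)
Definition craig (k : nat) : craig_state := iter k.-1 craig_step craig_init.

(* u^(k), p^(k) are defined: the recurrence has not stopped before index k,
   i.e. beta_j <> 0 for 2 <= j <= k. *)
Definition craig_defined (k : nat) : Prop :=
  (1 <= k)%N /\ forall j, (2 <= j <= k)%N -> cs_beta (craig j) != 0.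

Definition schur : 'M[R]_n := A^T *m invmx M *m A + C.

Definition krylov_vec (i : nat) : 'cV[R]_n :=
  iter i (fun x => invmx N *m (schur *m x)) (invmx N *m b).

Definition in_krylov (k : nat) (x : 'cV[R]_n) : Prop :=
  exists c : 'I_k -> R, x = \sum_(i < k) c i *: krylov_vec i.

End Craig.

From Pilot Require Import Defs.
From HB Require Import structures.
From mathcomp Require Import all_boot all_order all_algebra.
Import Order.TTheory GRing.Theory Num.Theory.
Local Open Scope ring_scope.
Set Implicit Arguments. Unset Strict Implicit. Unset Printing Implicit Defensive.

(* CRAIG is the Lanczos process for T := N^-1 S in the N-inner product in
   disguise: since v_k = M^-1 A r_k / alpha_k and t_k = C r_k / alpha_k, one has
   g_k = T r_k / alpha_k - alpha_k q_k with alpha_k = ||r_k||_S.  By induction,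
   q_1, ..., q_k are N-orthonormal and span K_k, and r_k is S-orthogonal to
   q_1, ..., q_(k-1); hence g_k is N-orthogonal to q_1, ..., q_k.  As the
   residual -b - S p^(k) equals zeta_k N g_k, p^(k) satisfies the Galerkin
   condition on K_k, whose solution is unique because S is positive definite.
   The same formula for v_k shows that every update preserves
   u^(k) = - M^-1 A p^(k). *)

Section BilinearForm.
Variables (R : rcfType) (k : nat).
Implicit Types (G B : 'M[R]_k) (x y z : 'cV[R]_k) (a : R).

Lemma bformDr G x y z : bform G x (y + z) = bform G x y + bform G x z.
Proof. by rewrite /bform mulmxDr mxE. Qed.

Lemma bformDl G x y z : bform G (x + y) z = bform G x z + bform G y z.
Proof. by rewrite /bform linearD /= !mulmxDl mxE. Qed.

Lemma bformZr G x y a : bform G x (a *: y) = a * bform G x y.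
Proof. by rewrite /bform -scalemxAr mxE. Qed.

Lemma bformZl G x y a : bform G (a *: x) y = a * bform G x y.
Proof. by rewrite /bform linearZ /= -!scalemxAl mxE. Qed.

Lemma bformNr G x y : bform G x (- y) = - bform G x y.
Proof. by rewrite -scaleN1r bformZr mulN1r. Qed.

Lemma bformNl G x y : bform G (- x) y = - bform G x y.
Proof. by rewrite -scaleN1r bformZl mulN1r. Qed.

Lemma bformBr G x y z : bform G x (y - z) = bform G x y - bform G x z.
Proof. by rewrite bformDr bformNr. Qed.

Lemma bformBl G x y z : bform G (x - y) z = bform G x z - bform G y z.
Proof. by rewrite bformDl bformNl. Qed.

Lemma bform0r G x : bform G x 0 = 0.
Proof. by rewrite /bform mulmx0 mxE. Qed.

Lemma bform_addmx G B x y : bform (G + B) x y = bform G x y + bform B x y.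
Proof. by rewrite /bform mulmxDr mulmxDl mxE. Qed.

Lemma bform_trmx G x y : bform G x y = bform G^T y x.
Proof.
have entry11 (X : 'M[R]_1) : X 0 0 = X^T 0 0 by rewrite mxE.
by rewrite /bform entry11 !trmx_mul trmxK mulmxA.
Qed.

Lemma bformC G x y : sym_mx G -> bform G x y = bform G y x.
Proof. by move=> symG; rewrite bform_trmx symG. Qed.

Lemma bform_mulmxr G B x y : bform G x (B *m y) = bform (G *m B) x y.
Proof. by rewrite /bform !mulmxA. Qed.

Lemma bform_mulmxl G B x y : bform G (B *m x) y = bform (B^T *m G) x y.
Proof. by rewrite /bform trmx_mul !mulmxA. Qed.

Lemma trmx_mulmx_bform G x y : sym_mx G -> ((G *m x)^T *m y) 0 0 = bform G x y.
Proof. by move=> symG; rewrite trmx_mul symG. Qed.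

End BilinearForm.

Section PositiveDefinite.
Variables (R : rcfType) (k : nat).
Implicit Types (G : 'M[R]_k) (x y : 'cV[R]_k).

Lemma spd_gt0 G x : spd G -> x != 0 -> 0 < bform G x x.
Proof. by case=> _; apply. Qed.

Lemma spd_ge0 G x : spd G -> 0 <= bform G x x.
Proof.
move=> spdG; have [->|x0] := eqVneq x 0; first by rewrite bform0r.
exact/ltW/spd_gt0.
Qed.

Lemma spd_bform_eq0 G x : spd G -> bform G x x = 0 -> x = 0.
Proof.
move=> spdG Gx0; apply/eqP; apply: contraT => x0.
by have := spd_gt0 spdG x0; rewrite Gx0 ltxx.
Qed.

Lemma spd_unitmx G : spd G -> G \in unitmx.
Proof.
move=> spdG; rewrite unitmxE unitfE; apply/negP => /det0P [v v0 vG0].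
have v0' : v^T != 0 by rewrite -(inj_eq (@trmx_inj _ _ _)) trmx0 trmxK.
by move: (spd_gt0 spdG v0'); rewrite /bform trmxK vG0 mul0mx mxE ltxx.
Qed.

Lemma bform_invmx G x y : sym_mx G -> G \in unitmx ->
  bform G (invmx G *m x) (invmx G *m y) = bform (invmx G) x y.
Proof.
move=> symG uG; rewrite bform_mulmxr bform_mulmxl mulmxV // mulmx1.
by rewrite trmx_inv symG.
Qed.

Lemma spd_invmx G : spd G -> spd (invmx G).
Proof.
move=> spdG; have uG := spd_unitmx spdG; have [symG _] := spdG.
split; first by rewrite /sym_mx trmx_inv symG.
move=> x x0; rewrite -bform_invmx //; apply: spd_gt0 => //.
by rewrite -(can_eq (mulKVmx uG)) mulmx0 in x0.
Qed.

Lemma gnorm_sqr G x : spd G -> Defs.gnorm G x ^+ 2 = bform G x x.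
Proof. by move=> spdG; rewrite /Defs.gnorm sqr_sqrtr // spd_ge0. Qed.

Lemma gnorm_eq0 G x : spd G -> (Defs.gnorm G x == 0) = (x == 0).
Proof.
move=> spdG; rewrite /Defs.gnorm sqrtr_eq0; apply/idP/eqP => [Gx_le0|->].
  by apply: (spd_bform_eq0 spdG); apply/eqP; rewrite eq_le Gx_le0 spd_ge0.
by rewrite bform0r.
Qed.

End PositiveDefinite.

Section Span.
Variables (R : rcfType) (n : nat).
Implicit Types (f g : nat -> 'cV[R]_n) (x y : 'cV[R]_n) (a : R).

Definition span f (j : nat) x : Prop :=
  exists c : nat -> R, x = \sum_(i < j) c i *: f i.

Lemma span0 f j : span f j 0.
Proof. by exists (fun _ => 0); rewrite big1 // => i _; rewrite scale0r. Qed.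

Lemma spanD f j x y : span f j x -> span f j y -> span f j (x + y).
Proof.
move=> [c1 ->] [c2 ->]; exists (fun i => c1 i + c2 i).
by rewrite -big_split; apply: eq_bigr => i _; rewrite scalerDl.
Qed.

Lemma spanZ f j a x : span f j x -> span f j (a *: x).
Proof.
move=> [c ->]; exists (fun i => a * c i).
by rewrite scaler_sumr; apply: eq_bigr => i _; rewrite scalerA.
Qed.

Lemma spanB f j x y : span f j x -> span f j y -> span f j (x - y).
Proof. by move=> fx fy; apply: spanD fx _; rewrite -scaleN1r; apply: spanZ. Qed.

Lemma span_gen f j i : (i < j)%N -> span f j (f i).
Proof.
move=> ij; exists (fun l => (l == i)%:R).
rewrite (bigD1 (Ordinal ij)) //= eqxx scale1r big1 ?addr0 // => l li.
have /negbTE-> : nat_of_ord l != i by apply: contra li => /eqP e; apply/eqP/val_inj.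
by rewrite scale0r.
Qed.

Lemma span_mulmx f g j j' (B : 'M[R]_n) x :
  (forall i, (i < j)%N -> span g j' (B *m f i)) -> span f j x -> span g j' (B *m x).
Proof.
move=> fg [c ->]; rewrite mulmx_sumr; apply: big_ind => [|u v|i _].
- exact: span0.
- exact: spanD.
- by rewrite -scalemxAr; apply/spanZ/fg.
Qed.

Lemma span_subset f g j j' x :
  (forall i, (i < j)%N -> span g j' (f i)) -> span f j x -> span g j' x.
Proof.
move=> fg fx; rewrite -(mul1mx x); apply: (span_mulmx (f := f)) fx => i ij.
by rewrite mul1mx; apply: fg.
Qed.

Lemma span_widen f j j' x : (j <= j')%N -> span f j x -> span f j' x.
Proof. by move=> jj'; apply: span_subset => i ij; apply/span_gen/leq_trans/jj'. Qed.

Lemma bform_span_eq0 f j (G : 'M[R]_n) y x :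
  (forall i, (i < j)%N -> bform G y (f i) = 0) -> span f j x -> bform G y x = 0.
Proof.
move=> yf [c ->]; apply: (big_ind (fun z => bform G y z = 0)) => [||i _].
- exact: bform0r.
- by move=> u v yu yv; rewrite bformDr yu yv addr0.
- by rewrite bformZr yf // mulr0.
Qed.

Lemma galerkin_unique f j (S : 'M[R]_n) c p1 p2 : spd S ->
  span f j p1 -> (forall x, span f j x -> ((c - S *m p1)^T *m x) 0 0 = 0) ->
  span f j p2 -> (forall x, span f j x -> ((c - S *m p2)^T *m x) 0 0 = 0) ->
  p1 = p2.
Proof.
move=> spdS fp1 orth1 fp2 orth2; have [symS _] := spdS.
have fd : span f j (p1 - p2) by apply: spanB.
apply/eqP; rewrite -subr_eq0; apply/eqP; apply: (spd_bform_eq0 spdS).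
rewrite -trmx_mulmx_bform //.
have -> : S *m (p1 - p2) = (c - S *m p2) - (c - S *m p1).
  by rewrite mulmxBr opprB [RHS]addrC addrA subrK.
by rewrite [(_ - _)^T]linearB /= mulmxBl mxE [X in _ + X]mxE orth1 // orth2 // subrr.
Qed.

End Span.

Lemma in_krylov_span (R : rcfType) m n M A C N b k (x : 'cV[R]_n) :
  in_krylov M A C N b k x <-> span (@krylov_vec R m n M A C N b) k x.
Proof.
split=> [[c ->]|[c ->]]; last by exists (fun i => c i).
by exists (fun l => oapp c 0 (insub l)); apply: eq_bigr => i _; rewrite valK.
Qed.

Lemma mulmx_full_col_rank_neq0 (R : fieldType) m n (A : 'M[R]_(m, n)) (x : 'cV[R]_n) :
  \rank A = n -> x != 0 -> A *m x != 0.
Proof.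
move=> rkA; apply: contra => /eqP Ax0.
have freeAt : row_free A^T by rewrite /row_free mxrank_tr rkA.
by rewrite -(inj_eq (@trmx_inj _ _ _)) trmx0 -(mulmx_free_eq0 _ freeAt) -trmx_mul Ax0 trmx0.
Qed.

Section Schur.
Variables (R : rcfType) (m n : nat).
Variables (M : 'M[R]_m) (A : 'M[R]_(m, n)) (C : 'M[R]_n).
Hypotheses (spdM : spd M) (rkA : \rank A = n) (spsdC : spsd C).

Lemma bform_schur x y :
  bform (schur M A C) x y = bform (invmx M) (A *m x) (A *m y) + bform C x y.
Proof. by rewrite /schur bform_addmx /bform trmx_mul !mulmxA. Qed.

Lemma schur_sym : sym_mx (schur M A C).
Proof.
have [[symM _] [symC _]] := (spdM, spsdC).
by rewrite /sym_mx /schur linearD /= !trmx_mul trmxK trmx_inv symM symC mulmxA.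
Qed.

Lemma schur_spd : spd (schur M A C).
Proof.
split=> [|x x0]; first exact: schur_sym.
rewrite bform_schur; apply: ltr_wpDr; first by case: spsdC.
exact/(spd_gt0 (spd_invmx spdM))/mulmx_full_col_rank_neq0.
Qed.

End Schur.

Section Craig.
Variables (R : rcfType) (m n : nat).
Variables (M : 'M[R]_m) (A : 'M[R]_(m, n)) (C N : 'M[R]_n) (b : 'cV[R]_n).
Hypotheses (spdM : spd M) (rkA : \rank A = n) (spsdC : spsd C).
Hypotheses (spdN : spd N) (b_neq0 : b != 0).

Local Notation S := (schur M A C).
Local Notation T := (invmx N *m schur M A C).
Local Notation craig_state := (craig_state R m n).
Local Notation step := (craig_step M A C N).
Local Notation st j := (craig M A C N b j).

Definition craig_g (s : craig_state) : 'cV[R]_n :=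
  invmx N *m (A^T *m cs_v s + cs_t s) - cs_alpha s *: cs_q s.

Definition craig_coupled (s : craig_state) : Prop :=
  [/\ cs_v s = (cs_alpha s)^-1 *: (invmx M *m (A *m cs_r s)),
      cs_t s = (cs_alpha s)^-1 *: (C *m cs_r s),
      cs_alpha s = Num.sqrt (bform S (cs_r s) (cs_r s)) &
      cs_u s = - (invmx M *m (A *m cs_p s))].

Lemma craigS j : (0 < j)%N -> st j.+1 = step (st j).
Proof. by case: j => // j _; rewrite /craig iterS. Qed.

Lemma craig_alpha_sqr (r : 'cV[R]_n) :
  bform M (invmx M *m (A *m r)) (invmx M *m (A *m r)) + (r^T *m (C *m r)) 0 0
  = bform S r r.
Proof.
have [symM _] := spdM.
by rewrite bform_invmx ?spd_unitmx // bform_schur /bform !mulmxA.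
Qed.

Lemma craig_init_coupled : craig_coupled (craig_init M A C N b).
Proof.
rewrite /craig_coupled /craig_init /= craig_alpha_sqr; split=> //.
by rewrite -!scalemxAr scaleNr opprK scalerA.
Qed.

Lemma craig_step_coupled s : craig_coupled s -> craig_coupled (step s).
Proof.
case=> vE tE _ uE; rewrite /craig_coupled /craig_step /=.
set beta := Defs.gnorm N _; set q' := beta^-1 *: _.
set r' := q' - (beta / cs_alpha s) *: cs_r s.
have -> : invmx M *m (A *m q') - beta *: cs_v s = invmx M *m (A *m r').
  by rewrite /r' vE scalerA !mulmxBr -!scalemxAr.
rewrite craig_alpha_sqr; split=> //; clearbody r'.
by rewrite uE !mulmxBr -!scalemxAr scalerA opprB addrC.
Qed.

Lemma craig_coupled_all j : craig_coupled (st j).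
Proof.
case: j => [|j]; first exact: craig_init_coupled.
elim: j => [|j IHj]; first exact: craig_init_coupled.
by rewrite craigS //; apply: craig_step_coupled.
Qed.

Lemma craig_gE s : craig_coupled s ->
  craig_g s = (cs_alpha s)^-1 *: (T *m cs_r s) - cs_alpha s *: cs_q s.
Proof.
case=> vE tE _ _; rewrite /craig_g vE tE -!scalemxAr -scalerDr -scalemxAr.
by rewrite /schur -mulmxA mulmxDl !mulmxA.
Qed.

Local Notation q j := (cs_q (st j)).
Local Notation r j := (cs_r (st j)).
Local Notation alpha j := (cs_alpha (st j)).
Local Notation beta j := (cs_beta (st j)).
Local Notation zeta j := (cs_zeta (st j)).
Local Notation p j := (cs_p (st j)).
Local Notation g j := (craig_g (st j)).
Local Notation K := (span (krylov_vec M A C N b)).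
Local Notation Q := (span (fun i => q i.+1)).

Lemma craig_q_succ j : (0 < j)%N -> q j.+1 = (beta j.+1)^-1 *: g j.
Proof. by move=> j_gt0; rewrite craigS. Qed.

Lemma craig_beta_succ j : (0 < j)%N -> beta j.+1 = Defs.gnorm N (g j).
Proof. by move=> j_gt0; rewrite craigS. Qed.

Lemma craig_r_succ j : (0 < j)%N -> r j.+1 = q j.+1 - (beta j.+1 / alpha j) *: r j.
Proof. by move=> j_gt0; rewrite craigS. Qed.

Lemma craig_zeta_succ j : (0 < j)%N -> zeta j.+1 = - (beta j.+1 / alpha j.+1) * zeta j.
Proof. by move=> j_gt0; rewrite craigS. Qed.

Lemma craig_p_succ j : (0 < j)%N -> p j.+1 = p j - (zeta j.+1 / alpha j.+1) *: r j.+1.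
Proof. by move=> j_gt0; rewrite craigS. Qed.

Lemma craig_q1 : q 1 = (beta 1)^-1 *: (invmx N *m b). Proof. by []. Qed.

Lemma craig_r1 : r 1 = q 1. Proof. by []. Qed.

Lemma craig_gE_all j : g j = (alpha j)^-1 *: (T *m r j) - alpha j *: q j.
Proof. exact/craig_gE/craig_coupled_all. Qed.

Lemma craig_alpha_sqr_all j : alpha j ^+ 2 = bform S (r j) (r j).
Proof.
have [_ _ -> _] := craig_coupled_all j.
by rewrite sqr_sqrtr // spd_ge0 //; apply: schur_spd.
Qed.

Lemma craig_g_beta j : (0 < j)%N -> beta j.+1 != 0 -> g j = beta j.+1 *: q j.+1.
Proof. by move=> j_gt0 be_neq0; rewrite craig_q_succ // scalerA mulfV // scale1r. Qed.

Lemma craig_beta1_neq0 : beta 1 != 0.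
Proof. by rewrite /= gnorm_eq0 //; apply: spd_invmx. Qed.

Lemma craig_r_span j : Q j.+1 (r j.+1).
Proof.
elim: j => [|j IHj]; first by rewrite craig_r1; apply: span_gen.
rewrite craig_r_succ //; apply: spanB; first exact: span_gen.
exact/spanZ/(span_widen _ IHj).
Qed.

Lemma craig_p_span j : Q j.+1 (p j.+1).
Proof.
elim: j => [|j IHj].
  by rewrite -[p 1]/(- (zeta 1 / alpha 1) *: r 1); apply/spanZ/craig_r_span.
rewrite craig_p_succ //; apply: spanB; first exact: span_widen IHj.
exact/spanZ/craig_r_span.
Qed.

Lemma krylov_vecS i : T *m krylov_vec M A C N b i = krylov_vec M A C N b i.+1.
Proof. by rewrite /krylov_vec iterS mulmxA. Qed.

Lemma craig_qr_krylov j : K j.+1 (q j.+1) /\ K j.+1 (r j.+1).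
Proof.
elim: j => [|j [Kq Kr]].
  have Kq1 : K 1 (q 1) by rewrite craig_q1; apply/spanZ/(span_gen _ (ltnSn 0)).
  by rewrite craig_r1.
have Kq' : K j.+2 (q j.+2).
  rewrite craig_q_succ // craig_gE_all; apply/spanZ/spanB; apply: spanZ.
    by apply: span_mulmx Kr => i ij; rewrite krylov_vecS; apply: span_gen.
  exact: span_widen Kq.
by split=> //; rewrite craig_r_succ //; apply/spanB/spanZ/(span_widen _ Kr).
Qed.

(* Vectors are 1-indexed in CRAIG: q i.+1 is the (i+1)-st Lanczos vector. *)
Definition lanczos_inv (J : nat) : Prop :=
  [/\ forall i l, (i < J)%N -> (l < J)%N -> bform N (q i.+1) (q l.+1) = (i == l)%:R,
      forall i, (i.+1 < J)%N -> bform S (r J) (q i.+1) = 0,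
      forall i, (i.+1 < J)%N -> Q i.+2 (T *m q i.+1) &
      forall i, (i < J)%N -> 0 < alpha i.+1].

Lemma lanczos_alpha_neq0 J i : lanczos_inv J -> (i < J)%N -> alpha i.+1 != 0.
Proof. by case=> _ _ _ alpha_gt0 iJ; rewrite gt_eqF ?alpha_gt0. Qed.

Lemma lanczos_T_span J j x : lanczos_inv J -> (j < J)%N -> Q j x -> Q j.+1 (T *m x).
Proof.
case=> _ _ Tq _ jJ; apply: span_mulmx => i ij.
exact/(span_widen _ (Tq i _))/(leq_ltn_trans ij jJ).
Qed.

Lemma craig_q_succE j : q j.+2 = r j.+2 + (beta j.+2 / alpha j.+1) *: r j.+1.
Proof. by rewrite craig_r_succ // subrK. Qed.

Lemma lanczos_schur_rq j : lanczos_inv j.+1 -> bform S (r j.+1) (q j.+1) = alpha j.+1 ^+ 2.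
Proof.
case: j => [|j] [_ rq _ _]; first by rewrite -craig_r1 craig_alpha_sqr_all.
rewrite craig_q_succE bformDr bformZr craig_alpha_sqr_all.
by rewrite (bform_span_eq0 (j := j.+1) _ (craig_r_span j)) ?mulr0 ?addr0.
Qed.

Lemma bform_T x y : bform N (T *m x) y = bform S x y.
Proof.
have [[symN _] uN] := (spdN, spd_unitmx spdN).
by rewrite bform_mulmxl trmx_mul trmx_inv symN schur_sym -?mulmxA ?mulVmx ?mulmx1.
Qed.

Lemma lanczos_g_orth j i : lanczos_inv j.+1 -> (i < j.+1)%N -> bform N (g j.+1) (q i.+1) = 0.
Proof.
move=> Ij ij; have [qq rq _ _] := Ij; have al_neq0 := lanczos_alpha_neq0 Ij (ltnSn j).
rewrite craig_gE_all bformBl !bformZl bform_T.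
move: ij; rewrite ltnS leq_eqVlt => /orP[/eqP-> | ij].
  by rewrite lanczos_schur_rq // qq // eqxx mulr1 expr2 mulKf // subrr.
by rewrite rq // qq ?(ltnW ij : (i < j.+1)%N) // (gtn_eqF ij) !mulr0 subrr.
Qed.

Lemma lanczos_T_q_sub_r j : lanczos_inv j.+1 -> Q j.+1 (T *m q j.+1 - T *m r j.+1).
Proof.
case: j => [|j] Ij; first by rewrite -craig_r1 subrr; apply: span0.
rewrite craig_q_succE mulmxDr addrC addKr -scalemxAr; apply: spanZ.
exact: lanczos_T_span Ij _ (craig_r_span j).
Qed.

Section LanczosStep.
Variable j : nat.
Hypotheses (Ij : lanczos_inv j.+1) (beta_neq0 : beta j.+2 != 0).

Let alpha_neq0 : alpha j.+1 != 0 := lanczos_alpha_neq0 Ij (ltnSn j).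

Lemma lanczos_q_succ_orth y : Q j.+1 y -> bform N (q j.+2) y = 0.
Proof.
apply: bform_span_eq0 => i ij.
by rewrite craig_q_succ // bformZl lanczos_g_orth // mulr0.
Qed.

Lemma lanczos_q_succ_unit : bform N (q j.+2) (q j.+2) = 1.
Proof.
rewrite craig_q_succ // bformZl bformZr -gnorm_sqr // -craig_beta_succ //.
by rewrite mulrA -expr2 -exprMn mulVf // expr1n.
Qed.

Lemma lanczos_T_r : T *m r j.+1 = (alpha j.+1 * beta j.+2) *: q j.+2 + alpha j.+1 ^+ 2 *: q j.+1.
Proof.
have gE := craig_gE_all j.+1; rewrite craig_g_beta // in gE.
have -> : T *m r j.+1 = alpha j.+1 *: (beta j.+2 *: q j.+2 + alpha j.+1 *: q j.+1).
  by rewrite gE subrK scalerA mulfV // scale1r.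
by rewrite scalerDr !scalerA expr2.
Qed.

Lemma lanczos_orthonormal_succ i l : (i < j.+2)%N -> (l < j.+2)%N ->
  bform N (q i.+1) (q l.+1) = (i == l)%:R.
Proof.
have [qq _ _ _] := Ij; have [symN _] := spdN.
rewrite ltnS leq_eqVlt => /orP[/eqP-> | ij]; rewrite ltnS leq_eqVlt => /orP[/eqP-> | lj].
- by rewrite lanczos_q_succ_unit eqxx.
- by rewrite lanczos_q_succ_orth ?(gtn_eqF lj) //; apply: span_gen.
- by rewrite bformC // lanczos_q_succ_orth ?(ltn_eqF ij) //; apply: span_gen.
- exact: qq.
Qed.

Lemma lanczos_conj_succ i : (i.+1 < j.+2)%N -> bform S (r j.+2) (q i.+1) = 0.
Proof.
have [_ rq Tq _] := Ij; have [symN _] := spdN.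
rewrite craig_r_succ // bformBl bformZl bformC; last exact: schur_sym.
rewrite -bform_T bformC // ltnS leq_eqVlt => /orP[/eqP[->] | ij].
  rewrite -[T *m q j.+1](subrK (T *m r j.+1)) bformDr.
  rewrite (lanczos_q_succ_orth (lanczos_T_q_sub_r Ij)) add0r lanczos_T_r.
  rewrite bformDr (bformZr _ _ _ (alpha j.+1 * _)) (bformZr _ _ _ (alpha j.+1 ^+ 2)).
  rewrite lanczos_q_succ_unit lanczos_q_succ_orth ?mulr0 ?addr0;
    last exact: span_gen.
  by rewrite lanczos_schur_rq // mulr1 expr2 mulrA divfK // mulrC subrr.
by rewrite rq // lanczos_q_succ_orth ?mulr0 ?subrr //; apply: span_widen (Tq i ij).
Qed.

Lemma lanczos_T_succ i : (i.+1 < j.+2)%N -> Q i.+2 (T *m q i.+1).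
Proof.
have [_ _ Tq _] := Ij.
rewrite ltnS leq_eqVlt => /orP[/eqP[->] | ij]; last exact: Tq.
rewrite -[T *m q j.+1](subrK (T *m r j.+1)); apply: spanD.
  exact: span_widen (lanczos_T_q_sub_r Ij).
by rewrite lanczos_T_r; apply: spanD; apply/spanZ/span_gen.
Qed.

Lemma lanczos_alpha_succ : 0 < alpha j.+2.
Proof.
have [_ _ -> _] := craig_coupled_all j.+2.
rewrite sqrtr_gt0; apply: spd_gt0; first exact: schur_spd.
have qr1 : bform N (q j.+2) (r j.+2) = 1.
  rewrite craig_r_succ // bformBr (bformZr _ _ _ (beta j.+2 / alpha j.+1)).
  by rewrite lanczos_q_succ_unit (lanczos_q_succ_orth (craig_r_span j)) mulr0 subr0.
by apply/eqP => r0; move: qr1; rewrite r0 bform0r => /esym/eqP; rewrite oner_eq0.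
Qed.

Lemma lanczos_inv_succ : lanczos_inv j.+2.
Proof.
split; [exact: lanczos_orthonormal_succ | exact: lanczos_conj_succ
       | exact: lanczos_T_succ | ].
move=> i; rewrite ltnS leq_eqVlt => /orP[/eqP-> | ij]; first exact: lanczos_alpha_succ.
by have [_ _ _] := Ij; apply.
Qed.

End LanczosStep.

Lemma craig_b : b = beta 1 *: (N *m q 1).
Proof.
rewrite craig_q1 -scalemxAr mulKVmx; last exact: spd_unitmx.
by rewrite scalerA mulfV ?craig_beta1_neq0 // scale1r.
Qed.

Lemma lanczos_inv1 : lanczos_inv 1.
Proof.
have q1_unit : bform N (q 1) (q 1) = 1.
  have [symN uN] := (proj1 spdN, spd_unitmx spdN).
  rewrite craig_q1 bformZl bformZr bform_invmx // -gnorm_sqr; last exact: spd_invmx.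
  by rewrite mulrA -expr2 -exprMn mulVf ?craig_beta1_neq0 // expr1n.
split=> [[|i] [|l] // | [|i] // | [|i] // | [|i] // _].
have [_ _ -> _] := craig_coupled_all 1.
rewrite sqrtr_gt0; apply: spd_gt0; first exact: schur_spd.
by apply/eqP => r0; move: q1_unit; rewrite -craig_r1 r0 bform0r => /esym/eqP; rewrite oner_eq0.
Qed.

Lemma craig_N_g j : N *m g j = (alpha j)^-1 *: (S *m r j) - alpha j *: (N *m q j).
Proof.
rewrite craig_gE_all mulmxBr -!scalemxAr !mulmxA mulmxV ?mul1mx //.
exact: spd_unitmx.
Qed.

Section CraigDefined.
Variable k : nat.
Hypothesis beta_neq0 : forall i, (2 <= i <= k)%N -> beta i != 0.

Lemma lanczos_inv_craig j : (j < k)%N -> lanczos_inv j.+1.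
Proof.
elim: j => [|j IHj] jk; first exact: lanczos_inv1.
by apply: lanczos_inv_succ; [apply/IHj/ltnW | apply: beta_neq0].
Qed.

Lemma craig_residual j : (j < k)%N -> - b - S *m p j.+1 = zeta j.+1 *: (N *m g j.+1).
Proof.
elim: j => [|j IHj] jk.
  have al_neq0 := lanczos_alpha_neq0 (lanczos_inv_craig jk) (ltnSn 0).
  rewrite craig_N_g -[p 1]/(- (zeta 1 / alpha 1) *: r 1) {1}craig_b -craig_r1.
  rewrite -[zeta 1]/(beta 1 / alpha 1); move: (alpha 1) (beta 1) (r 1) al_neq0.
  move=> a be r1 a_neq0.
  by rewrite scalerBr !scalerA -scalemxAr scaleNr opprK divfK // addrC.
have al_neq0 := lanczos_alpha_neq0 (lanczos_inv_craig jk) (ltnSn j.+1).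
have be_neq0 : beta j.+2 != 0 by apply: beta_neq0.
have zeta_alpha : zeta j.+2 * alpha j.+2 = - (zeta j.+1 * beta j.+2).
  by rewrite craig_zeta_succ // mulrAC mulNr divfK // mulNr mulrC.
rewrite craig_p_succ // mulmxBr opprB addrCA addrC IHj ?(ltnW jk) //.
rewrite craig_g_beta // craig_N_g.
move: (zeta j.+2) (alpha j.+2) (r j.+2) (q j.+2) (zeta j.+1) (beta j.+2) zeta_alpha.
move=> z a r' q' z1 be zaE.
by rewrite -scalemxAr scalerA scalerBr !scalerA -scalemxAr zaE scaleNr opprK addrC.
Qed.

End CraigDefined.

Lemma krylov_span_lanczos k x : lanczos_inv k.+1 -> K k.+1 x <-> Q k.+1 x.
Proof.
move=> Ik; split; apply: span_subset => i ik.
  apply: (span_widen ik); elim: i ik => [|i IHi] ik.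
    rewrite -[krylov_vec _ _ _ _ _ 0]/(invmx N *m b) -[invmx N *m b]scale1r.
    rewrite -(mulfV craig_beta1_neq0) -scalerA -craig_q1; exact/spanZ/span_gen.
  by rewrite -krylov_vecS; apply: (lanczos_T_span Ik) (IHi (ltnW ik)).
exact: span_widen ik (craig_qr_krylov i).1.
Qed.

Lemma craig_galerkin k : craig_defined M A C N b k ->
  in_krylov M A C N b k (p k) /\
  forall x, in_krylov M A C N b k x -> ((- b - S *m p k)^T *m x) 0 0 = 0.
Proof.
case=> k_gt0 beta_neq0; case: k k_gt0 beta_neq0 => // k _ beta_neq0.
have Ik := lanczos_inv_craig beta_neq0 (ltnSn k); have [symN _] := spdN.
split; first exact/in_krylov_span/(krylov_span_lanczos _ Ik)/craig_p_span.
move=> x /in_krylov_span /(krylov_span_lanczos _ Ik) Qx.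
rewrite (craig_residual beta_neq0 (ltnSn k)) linearZ /= -scalemxAl mxE.
rewrite trmx_mulmx_bform // (bform_span_eq0 _ Qx) ?mulr0 // => i ik.
exact: lanczos_g_orth.
Qed.

End Craig.

Theorem theorem3p1 (R : rcfType) (m n : nat)
  (M : 'M[R]_m) (A : 'M[R]_(m, n)) (C N : 'M[R]_n) (b : 'cV[R]_n) (k : nat) :
  (n <= m)%N ->
  spd M ->
  \rank A = n ->
  spsd C ->
  b != 0 ->
  spd N ->
  craig_defined M A C N b k ->
  let st := craig M A C N b k in
  (forall p : 'cV[R]_n,
     (in_krylov M A C N b k p /\
      forall x : 'cV[R]_n, in_krylov M A C N b k x ->
        ((- b - schur M A C *m p)^T *m x) 0 0 = 0)
     <-> p = cs_p st)
  /\ cs_u st = - (invmx M *m (A *m cs_p st)).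
Proof.
move=> _ spdM rkA spsdC b_neq0 spdN k_def st.
have [Kpk orth_pk] := craig_galerkin spdM rkA spsdC spdN b_neq0 k_def.
split; last by have [_ _ _] := craig_coupled_all A C N b spdM k.
move=> p; split=> [[Kp orth_p] | ->] //.
have spanK := in_krylov_span M A C N b k.
apply: (galerkin_unique (j := k) (schur_spd spdM rkA spsdC)).
- exact/spanK.
- by move=> x /spanK; apply: orth_p.
- exact/spanK.
- by move=> x /spanK; apply: orth_pk.
Qed.
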